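(* Consider the local public good game described in the context and suppose Assumption 1 holds. Then the efficient network is either empty or a star in which only the hub is active (provides a positive amount of the public good), with possibly some players isolated from the star; a player is isolated if her valuation of the public good is too low.
   Context: There is a finite set of players $N=\{1,\dots,n\}$. An allocation specifies for each player $i$ a public good provision $x_i\ge 0$, a private good consumption $y_i\ge 0$, and links $g_i\in\{0,1\}^n$ with $g_{ii}=0$; $g_{ij}=1$ means $i$ links to $j$, at cost $k>0$ to $i$. Let $\eta_i(g)=|\{j:g_{ij}=1\}|$. Player $i$'s public good consumption is $\bar x_i=x_i+\sum_jg_{ij}x_j$ and her utility is $U_i(\bar x_i,y_i)$, where $U_i$ is twice continuously differentiable, strictly concave and increasing in both arguments. Player $i$ has wealth $w_i>0$ and faces price $p_i>0$ for the private good (public good price $1$). The efficient allocation maximizes welfare $\sum_iU_i(\bar x_i,y_i)$ subject to the aggregate resource constraint $\sum_i(x_i+p_iy_i+\eta_i(g)k)\le\sum_iw_i$. The Engel curve $\gamma_i$ gives, for income $W$, the public good consumption maximizing $U_i(\bar x,y)$ subject to $\bar x+p_iy=W$; Assumption 1: each $\gamma_i$ is continuously differentiable with $\gamma_i'\in[0,1]$. A star is a network with one hub $h$ to which every other member links, with no other links among its members; isolated players have no links. *)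

(* Players are the naturals 0..n-1. *)
From Stdlib Require Import Reals List.
From Coquelicot Require Import Coquelicot.
Open Scope R_scope.

Definition sumR (n : nat) (f : nat -> R) : R :=
  fold_right Rplus 0 (map f (seq 0 n)).

(* g i j = true  <->  i links to j *)
Definition network := nat -> nat -> bool.

Definition eta (n : nat) (g : network) (i : nat) : R :=
  sumR n (fun j => if g i j then 1 else 0).

Definition xbar (n : nat) (x : nat -> R) (g : network) (i : nat) : R :=
  x i + sumR n (fun j => if g i j then x j else 0).

Definition feasible (n : nat) (w p : nat -> R) (k : R)
  (x y : nat -> R) (g : network) : Prop :=
  (forall i, (i < n)%nat -> 0 <= x i /\ 0 <= y i /\ g i i = false) /\
  sumR n (fun i => x i + p i * y i + eta n g i * k) <= sumR n w.

Definition welfare (n : nat) (U : nat -> R -> R -> R)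
  (x y : nat -> R) (g : network) : R :=
  sumR n (fun i => U i (xbar n x g i) (y i)).

Definition efficient (n : nat) (U : nat -> R -> R -> R) (w p : nat -> R) (k : R)
  (x y : nat -> R) (g : network) : Prop :=
  feasible n w p k x y g /\
  forall x' y' g', feasible n w p k x' y' g' ->
    welfare n U x' y' g' <= welfare n U x y g.

Definition d1 (u : R -> R -> R) (a b : R) : R := Derive (fun t => u t b) a.
Definition d2 (u : R -> R -> R) (a b : R) : R := Derive (fun t => u a t) b.

Definition C1_at (u : R -> R -> R) (a b : R) : Prop :=
  ex_derive (fun t => u t b) a /\ ex_derive (fun t => u a t) b /\
  continuity_2d_pt (d1 u) a b /\ continuity_2d_pt (d2 u) a b.

Definition C2_at (u : R -> R -> R) (a b : R) : Prop :=
  C1_at u a b /\ C1_at (d1 u) a b /\ C1_at (d2 u) a b.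

(* twice continuously differentiable on (an open neighbourhood of) the
   closed quadrant [0,oo)^2 *)
Definition C2_quadrant (u : R -> R -> R) : Prop :=
  exists eps, 0 < eps /\ forall a b, -eps < a -> -eps < b -> C2_at u a b.

Definition strictly_concave_quadrant (u : R -> R -> R) : Prop :=
  forall a b a' b' t, 0 <= a -> 0 <= b -> 0 <= a' -> 0 <= b' ->
    (a, b) <> (a', b') -> 0 < t < 1 ->
    t * u a b + (1 - t) * u a' b' < u (t * a + (1 - t) * a') (t * b + (1 - t) * b').

Definition increasing_quadrant (u : R -> R -> R) : Prop :=
  (forall a a' b, 0 <= a -> a < a' -> 0 <= b -> u a b < u a' b) /\
  (forall a b b', 0 <= a -> 0 <= b -> b < b' -> u a b < u a b').

Definition engel_curve (u : R -> R -> R) (q : R) (gam : R -> R) : Prop :=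
  forall W, 0 <= W ->
    0 <= gam W <= W /\
    forall xb yv, 0 <= xb -> 0 <= yv -> xb + q * yv = W ->
      u xb yv <= u (gam W) ((W - gam W) / q).

Definition assumption1_curve (gam : R -> R) : Prop :=
  forall W, 0 < W ->
    ex_derive gam W /\ 0 <= Derive gam W <= 1 /\ continuous (Derive gam) W.

Definition empty_network (n : nat) (g : network) : Prop :=
  forall i j, (i < n)%nat -> (j < n)%nat -> g i j = false.

(* Players outside the star
   are unconstrained in their provision. *)
Definition star_only_hub_active (n : nat) (g : network) (x : nat -> R) : Prop :=
  exists (h : nat) (S : nat -> bool),
    (h < n)%nat /\ S h = true /\
    (exists i, (i < n)%nat /\ S i = true /\ i <> h) /\
    (forall i j, (i < n)%nat -> (j < n)%nat ->
       (g i j = true <-> (S i = true /\ i <> h /\ j = h))) /\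
    0 < x h /\
    (forall i, (i < n)%nat -> S i = true -> i <> h -> x i = 0).

(* Efficiency is contradicted by explicit improvements.  A link to an inactive
   player can be dropped and its cost spent on private consumption, so every
   link target is active.  If an active player [a] forms a link, or shares a
   linker with a player [b] not linking to her, then merging [a]'s provision into
   [b] and rewiring [a]'s links to [b] hurts nobody and does not raise link
   costs; so linkers are inactive, targets form no links, and nobody links to two
   targets.  Finally, for two targets [t1], [t2] with [x t2 <= x t1], efficiency
   yields a first-order condition for shifting provision between them, both in
   [g] and in the (no worse) network where the linkers of [t2] are redirected to
   [t1]; the difference of the two conditions is a positive sum of marginal
   utilities.  Hence all links point to a single hub. *)

From Stdlib Require Import Reals List Lra Lia Bool Classical.
From Coquelicot Require Import Coquelicot.
Open Scope R_scope.

Lemma sumR_S n f : sumR (S n) f = sumR n f + f n.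
Proof.
  unfold sumR. rewrite seq_S, map_app, fold_right_app. simpl.
  induction (map f (seq 0 n)) as [|a l IH]; simpl; lra.
Qed.

Lemma sumR_ext n f f' : (forall i, (i < n)%nat -> f i = f' i) -> sumR n f = sumR n f'.
Proof.
  induction n as [|n IH]; intros H; [reflexivity|].
  rewrite !sumR_S, IH, H; auto.
Qed.

Lemma sumR_le n f f' : (forall i, (i < n)%nat -> f i <= f' i) -> sumR n f <= sumR n f'.
Proof.
  induction n as [|n IH]; intros H; [unfold sumR; simpl; lra|].
  rewrite !sumR_S. assert (f n <= f' n) by auto. assert (sumR n f <= sumR n f') by auto.
  lra.
Qed.

Lemma sumR_lt n f f' j : (forall i, (i < n)%nat -> f i <= f' i) -> (j < n)%nat ->
  f j < f' j -> sumR n f < sumR n f'.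
Proof.
  induction n as [|n IH]; intros H Hj Hfj; [lia|].
  rewrite !sumR_S. assert (f n <= f' n) by auto.
  destruct (Nat.eq_dec j n) as [->|Hjn].
  - assert (sumR n f <= sumR n f') by (apply sumR_le; auto). lra.
  - assert (sumR n f < sumR n f') by (apply IH; auto; lia). lra.
Qed.

Lemma sumR_plus n f f' : sumR n (fun i => f i + f' i) = sumR n f + sumR n f'.
Proof. induction n as [|n IH]; [unfold sumR; simpl; lra|]. rewrite !sumR_S, IH; lra. Qed.

Lemma sumR_minus n f f' : sumR n (fun i => f i - f' i) = sumR n f - sumR n f'.
Proof. induction n as [|n IH]; [unfold sumR; simpl; lra|]. rewrite !sumR_S, IH; lra. Qed.

Lemma sumR_scal n c f : sumR n (fun i => c * f i) = c * sumR n f.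
Proof. induction n as [|n IH]; [unfold sumR; simpl; lra|]. rewrite !sumR_S, IH; lra. Qed.

Lemma sumR_nonneg n f : (forall i, (i < n)%nat -> 0 <= f i) -> 0 <= sumR n f.
Proof.
  intros H. replace 0 with (sumR n (fun _ => 0)) at 1.
  - apply sumR_le; auto.
  - induction n as [|n IH]; [reflexivity|]. rewrite sumR_S, IH; [lra|auto].
Qed.

Lemma sumR_perturb n f f' a c : (a < n)%nat ->
  (forall v, (v < n)%nat -> f' v = f v + (if Nat.eqb v a then c else 0)) ->
  sumR n f' = sumR n f + c.
Proof.
  induction n as [|n IH]; intros Ha Hf'; [lia|].
  rewrite !sumR_S, Hf' by lia.
  destruct (Nat.eqb_spec n a) as [->|Hna].
  - rewrite (sumR_ext a f' f); [lra|].
    intros v Hv. rewrite Hf' by lia. destruct (Nat.eqb_spec v a); [lia|lra].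
  - rewrite IH; [lra|lia|]. intros v Hv. apply Hf'. lia.
Qed.

Lemma sumR_perturb2 n f f' a b ca cb : (a < n)%nat -> (b < n)%nat ->
  (forall v, (v < n)%nat -> f' v = f v + (if Nat.eqb v a then ca else 0)
                                      + (if Nat.eqb v b then cb else 0)) ->
  sumR n f' = sumR n f + ca + cb.
Proof.
  intros Ha Hb Hf'.
  rewrite (sumR_perturb n (fun v => f v + if Nat.eqb v a then ca else 0) f' b cb); auto.
  rewrite (sumR_perturb n f _ a ca); auto.
Qed.

Lemma Derive_gt_0_of_concave (f : R -> R) (a : R) :
  ex_derive f a -> f a < f (a + 1) ->
  (forall t, 0 < t < 1 -> t * f (a + 1) + (1 - t) * f a <= f (a + t)) ->
  0 < Derive f a.
Proof.
  intros Hex Hlt Hconc.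
  set (s := f (a + 1) - f a).
  destruct (Rle_or_lt s (Derive f a)) as [Hs|Hs]; [unfold s in Hs; lra|exfalso].
  pose proof (Derive_correct _ _ Hex) as Hd. apply is_derive_Reals in Hd.
  destruct (Hd (s - Derive f a)) as [[d Hd0] Hq]; [lra|]. simpl in Hq.
  set (h := Rmin (d / 2) (1 / 2)).
  assert (Hh : 0 < h) by (apply Rmin_pos; lra).
  assert (Hh1 := Rmin_l (d / 2) (1 / 2)). assert (Hh2 := Rmin_r (d / 2) (1 / 2)).
  fold h in Hh1, Hh2.
  specialize (Hq h ltac:(lra) ltac:(rewrite Rabs_right; lra)).
  assert (Hsecant : s <= (f (a + h) - f a) / h).
  { specialize (Hconc h ltac:(lra)). apply (Rmult_le_reg_r h); [lra|].
    unfold Rdiv. rewrite Rmult_assoc, Rinv_l by lra. unfold s. lra. }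
  apply Rabs_def2 in Hq. lra.
Qed.

Lemma is_derive_local_max (f : R -> R) (c l r : R) : is_derive f c l -> 0 < r ->
  (forall t, c - r < t < c + r -> f t <= f c) -> l = 0.
Proof.
  intros Hd Hr Hmax. apply is_derive_Reals in Hd.
  exact (deriv_maximum f (c - r) (c + r) c (exist _ l Hd) ltac:(lra) ltac:(lra)
           (fun t H1 H2 => Hmax t (conj H1 H2))).
Qed.

Lemma is_derive_sumR n (F : nat -> R -> R) (F' : nat -> R) t0 :
  (forall u, (u < n)%nat -> is_derive (F u) t0 (F' u)) ->
  is_derive (fun t => sumR n (fun u => F u t)) t0 (sumR n F').
Proof.
  induction n as [|n IH]; intros H.
  - apply (is_derive_ext (fun _ => 0)); [reflexivity|]. apply (is_derive_const 0).
  - apply (is_derive_ext (fun t => sumR n (fun u => F u t) + F n t)).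
    { intros t. rewrite sumR_S. reflexivity. }
    rewrite sumR_S. apply (is_derive_plus (fun t => sumR n (fun u => F u t)) (F n)); auto.
Qed.

Lemma is_derive_along_line (G : R -> R) (A e : R) : ex_derive G A ->
  is_derive (fun t => G (A + t * e)) 0 (e * Derive G A).
Proof.
  intros Hex. apply Derive_correct in Hex.
  assert (Hline : is_derive (fun t => A + t * e) 0 e).
  { auto_derive; [exact Logic.I|]. apply Rmult_1_l. }
  pose proof (is_derive_comp G (fun t => A + t * e) 0 (Derive G A) e) as Hc.
  simpl in Hc. replace (A + 0 * e) with A in Hc by ring. exact (Hc Hex Hline).
Qed.

Definition admissible (n : nat) (x y : nat -> R) (g : network) : Prop :=
  forall i, (i < n)%nat -> 0 <= x i /\ 0 <= y i /\ g i i = false.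

Definition expenditure (n : nat) (p : nat -> R) (k : R) (x y : nat -> R) (g : network) : R :=
  sumR n x + sumR n (fun i => p i * y i) + k * sumR n (eta n g).

Lemma feasibleE n w p k x y g :
  feasible n w p k x y g <-> admissible n x y g /\ expenditure n p k x y g <= sumR n w.
Proof.
  unfold feasible, admissible, expenditure.
  rewrite (sumR_plus n (fun i => x i + p i * y i) (fun i => eta n g i * k)),
    (sumR_plus n x (fun i => p i * y i)),
    (sumR_ext n (fun i => eta n g i * k) (fun i => k * eta n g i)), sumR_scal
    by (intros; ring).
  tauto.
Qed.

Lemma xbar_nonneg n x g i : (forall j, (j < n)%nat -> 0 <= x j) -> (i < n)%nat ->
  0 <= xbar n x g i.
Proof.
  intros Hx Hi. unfold xbar.
  assert (0 <= sumR n (fun j => if g i j then x j else 0)).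
  { apply sumR_nonneg. intros j Hj. destruct (g i j); [auto|lra]. }
  specialize (Hx i Hi). lra.
Qed.

Ltac case_links :=
  repeat (match goal with
          | |- context [Nat.eqb ?a ?b] => destruct (Nat.eqb_spec a b); subst
          | |- context [?g ?u ?v] => is_var g;
              match type of (g u v) with bool => destruct (g u v) eqn:? end
          end); simpl in *; try lia; try congruence; try lra.

Definition unlink (g : network) (i j : nat) : network :=
  fun u v => if Nat.eqb u i && Nat.eqb v j then false else g u v.

(* [a] hands her provision to [b]; links to [a] are redirected to [b], and [a]
   herself links to [b]. *)
Definition mergeX (x : nat -> R) (a b : nat) : nat -> R :=
  fun v => if Nat.eqb v a then 0 else if Nat.eqb v b then x a + x b else x v.

Definition mergeG (g : network) (a b : nat) : network :=
  fun u v => if Nat.eqb v a then false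
             else if Nat.eqb u a then g a v || Nat.eqb v b
             else if Nat.eqb v b then (g u b || g u a) && negb (Nat.eqb u b)
             else g u v.

Lemma mergeG_loop g a b u : g a a = false -> g u u = false -> mergeG g a b u u = false.
Proof. intros Ha Hu. unfold mergeG. case_links. Qed.

Lemma mergeX_sum n x a b : (a < n)%nat -> (b < n)%nat -> a <> b ->
  sumR n (mergeX x a b) = sumR n x.
Proof.
  intros Ha Hb Hab. rewrite (sumR_perturb2 n x _ a b (- x a) (x a)); auto; [lra|].
  intros v Hv. unfold mergeX. case_links.
Qed.

Section Merge.
Variables (n : nat) (x : nat -> R) (g : network) (a b : nat).
Hypotheses (Ha : (a < n)%nat) (Hb : (b < n)%nat) (Hab : a <> b).
Hypotheses (Haa : g a a = false) (Hbb : g b b = false).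

Lemma merge_eta_src : eta n (mergeG g a b) a = eta n g a + (if g a b then 0 else 1).
Proof.
  unfold eta. rewrite (sumR_perturb2 n (fun j => if g a j then 1 else 0) _ a b 0
    (if g a b then 0 else 1)); auto; [lra|].
  intros v Hv. unfold mergeG. case_links.
Qed.

Lemma merge_eta_dst : eta n (mergeG g a b) b = eta n g b - (if g b a then 1 else 0).
Proof.
  unfold eta. rewrite (sumR_perturb2 n (fun j => if g b j then 1 else 0) _ a b
    (if g b a then -1 else 0) 0); auto; [case_links|].
  intros v Hv. unfold mergeG. case_links.
Qed.

Lemma merge_eta_other u : u <> a -> u <> b ->
  eta n (mergeG g a b) u = eta n g u - (if g u a && g u b then 1 else 0).
Proof.
  intros Hua Hub. unfold eta.
  rewrite (sumR_perturb2 n (fun j => if g u j then 1 else 0) _ a b (if g u a then -1 else 0)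
    (if g u b then 0 else if g u a then 1 else 0)); auto; [case_links|].
  intros v Hv. unfold mergeG. case_links.
Qed.

Lemma merge_xbar_dst :
  xbar n (mergeX x a b) (mergeG g a b) b = xbar n x g b + (if g b a then 0 else x a).
Proof.
  unfold xbar.
  rewrite (sumR_perturb2 n (fun j => if g b j then x j else 0)
    (fun j => if mergeG g a b b j then mergeX x a b j else 0) a b
    (if g b a then - x a else 0) 0); auto.
  - unfold mergeX. case_links.
  - intros v Hv. unfold mergeX, mergeG. case_links.
Qed.

Lemma merge_xbar_ge u : (u < n)%nat -> 0 <= x a -> 0 <= x b ->
  xbar n x g u <= xbar n (mergeX x a b) (mergeG g a b) u.
Proof.
  intros Hu Hxa Hxb.
  destruct (Nat.eq_dec u b) as [->|Hub]; [rewrite merge_xbar_dst; case_links|].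
  unfold xbar.
  destruct (Nat.eq_dec u a) as [->|Hua].
  - rewrite (sumR_perturb2 n (fun j => if g a j then x j else 0)
      (fun j => if mergeG g a b a j then mergeX x a b j else 0) a b 0
      (x a + x b - (if g a b then x b else 0))); auto.
    + unfold mergeX. case_links.
    + intros v Hv. unfold mergeX, mergeG. case_links.
  - rewrite (sumR_perturb2 n (fun j => if g u j then x j else 0)
      (fun j => if mergeG g a b u j then mergeX x a b j else 0) a b
      (if g u a then - x a else 0)
      (if g u b then x a else if g u a then x a + x b else 0)); auto.
    + unfold mergeX. case_links.
    + intros v Hv. unfold mergeX, mergeG. case_links.
Qed.

End Merge.

Definition shiftX (x : nat -> R) (t1 t2 : nat) (t : R) : nat -> R :=
  fun v => if Nat.eqb v t1 then x t1 + t else if Nat.eqb v t2 then x t2 - t else x v.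

Definition redirG (g : network) (t1 t2 : nat) : network :=
  fun u v => if Nat.eqb v t2 then false else if Nat.eqb v t1 then g u t1 || g u t2 else g u v.

Definition indicator (b : bool) : R := if b then 1 else 0.

Definition shift_dir (g : network) (t1 t2 u : nat) : R :=
  indicator (Nat.eqb u t1) - indicator (Nat.eqb u t2) + indicator (g u t1) - indicator (g u t2).

Definition redirect_dir (g : network) (t1 t2 u : nat) : R :=
  indicator (Nat.eqb u t1) - indicator (Nat.eqb u t2) + indicator (g u t1 || g u t2).

Definition redirect_gain (x : nat -> R) (g : network) (t1 t2 u : nat) : R :=
  if g u t2 then x t1 - x t2 else 0.

Section Shift.
Variables (n : nat) (x : nat -> R) (g : network) (t1 t2 : nat).
Hypotheses (H1 : (t1 < n)%nat) (H2 : (t2 < n)%nat) (H12 : t1 <> t2).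

Lemma shiftX_sum t : sumR n (shiftX x t1 t2 t) = sumR n x.
Proof.
  rewrite (sumR_perturb2 n x _ t1 t2 t (- t)); auto; [lra|].
  intros v Hv. unfold shiftX. case_links.
Qed.

Lemma shift_xbar t u :
  xbar n (shiftX x t1 t2 t) g u = xbar n x g u + t * shift_dir g t1 t2 u.
Proof.
  unfold xbar, shift_dir, indicator.
  rewrite (sumR_perturb2 n (fun j => if g u j then x j else 0)
     (fun j => if g u j then shiftX x t1 t2 t j else 0) t1 t2
     (if g u t1 then t else 0) (if g u t2 then - t else 0)); auto.
  - unfold shiftX. case_links.
  - intros v Hv. unfold shiftX. case_links.
Qed.

Lemma redirect_xbar t u : (g u t1 = true -> g u t2 = false) ->
  xbar n (shiftX x t1 t2 t) (redirG g t1 t2) u =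
    xbar n x g u + redirect_gain x g t1 t2 u + t * redirect_dir g t1 t2 u.
Proof.
  intros Hnb. unfold xbar, redirect_gain, redirect_dir, indicator.
  rewrite (sumR_perturb2 n (fun j => if g u j then x j else 0)
     (fun j => if redirG g t1 t2 u j then shiftX x t1 t2 t j else 0) t1 t2
     (if g u t1 then t else if g u t2 then x t1 + t else 0) (if g u t2 then - x t2 else 0)); auto.
  - unfold shiftX. destruct (g u t1) eqn:E1; [rewrite (Hnb eq_refl)|]; case_links.
  - intros v Hv. unfold shiftX, redirG. case_links.
Qed.

Lemma redirect_eta_le u : eta n (redirG g t1 t2) u <= eta n g u.
Proof.
  unfold eta.
  rewrite (sumR_perturb2 n (fun j => if g u j then 1 else 0)
     (fun j => if redirG g t1 t2 u j then 1 else 0) t1 t2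
     (if g u t1 then 0 else if g u t2 then 1 else 0) (if g u t2 then -1 else 0)); auto.
  - case_links.
  - intros v Hv. unfold redirG. case_links.
Qed.

End Shift.

Section EfficientAllocation.
Variables (n : nat) (U : nat -> R -> R -> R) (w p : nat -> R) (k : R).
Hypothesis Hk : 0 < k.
Hypothesis Hp : forall i, (i < n)%nat -> 0 < p i.
Hypothesis HUinc : forall i, (i < n)%nat -> increasing_quadrant (U i).
Hypothesis HUder : forall i a b, (i < n)%nat -> 0 <= a -> 0 <= b ->
  ex_derive (fun s => U i s b) a.
Hypothesis HUmarg : forall i a b, (i < n)%nat -> 0 <= a -> 0 <= b ->
  0 < Derive (fun s => U i s b) a.

Lemma U_le i a a' b b' : (i < n)%nat -> 0 <= a <= a' -> 0 <= b <= b' -> U i a b <= U i a' b'.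
Proof.
  intros Hi Ha Hb. destruct (HUinc i Hi) as [Hinc1 Hinc2].
  apply Rle_trans with (U i a' b).
  - destruct (Req_dec a a') as [->|]; [lra|left; apply Hinc1; lra].
  - destruct (Req_dec b b') as [->|]; [lra|left; apply Hinc2; lra].
Qed.

Lemma U_lt i a a' b b' : (i < n)%nat -> 0 <= a <= a' -> 0 <= b <= b' -> a < a' \/ b < b' ->
  U i a b < U i a' b'.
Proof.
  intros Hi Ha Hb [Hlt|Hlt]; destruct (HUinc i Hi) as [Hinc1 Hinc2].
  - apply Rlt_le_trans with (U i a' b); [apply Hinc1; lra|apply U_le; auto; lra].
  - apply Rle_lt_trans with (U i a' b); [apply U_le; auto; lra|apply Hinc2; lra].
Qed.

Lemma welfare_first_order (A c yv : nat -> R) r :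
  (forall u, (u < n)%nat -> 0 <= A u) -> (forall u, (u < n)%nat -> 0 <= yv u) -> 0 < r ->
  (forall t, -r < t < r -> sumR n (fun u => U u (A u + t * c u) (yv u))
                          <= sumR n (fun u => U u (A u) (yv u))) ->
  sumR n (fun u => c u * Derive (fun s => U u s (yv u)) (A u)) = 0.
Proof.
  intros HA Hy Hr Hmax.
  apply (is_derive_local_max (fun t => sumR n (fun u => U u (A u + t * c u) (yv u))) 0 _ r).
  - apply (is_derive_sumR n (fun u t => U u (A u + t * c u) (yv u))).
    intros u Hu. apply (is_derive_along_line (fun s => U u s (yv u))). auto.
  - exact Hr.
  - intros t Ht.
    rewrite (sumR_ext n (fun u => U u (A u + 0 * c u) (yv u)) (fun u => U u (A u) (yv u)))
      by (intros; f_equal; ring).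
    apply Hmax. lra.
Qed.

Variables (x y : nat -> R) (g : network).
Hypothesis Heff : efficient n U w p k x y g.

Lemma efficient_admissible : admissible n x y g.
Proof. apply (proj1 (feasibleE n w p k x y g) (proj1 Heff)). Qed.

Lemma efficient_welfare_ge x' y' g' : admissible n x' y' g' ->
  expenditure n p k x' y' g' <= expenditure n p k x y g ->
  welfare n U x' y' g' <= welfare n U x y g.
Proof.
  intros Hadm Hexp. destruct Heff as [Hfeas Hopt]. apply Hopt, feasibleE.
  apply feasibleE in Hfeas. split; [exact Hadm|lra].
Qed.

Lemma no_pareto_improvement x' y' g' j : admissible n x' y' g' ->
  expenditure n p k x' y' g' <= expenditure n p k x y g ->
  (forall i, (i < n)%nat -> U i (xbar n x g i) (y i) <= U i (xbar n x' g' i) (y' i)) ->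
  (j < n)%nat -> U j (xbar n x g j) (y j) < U j (xbar n x' g' j) (y' j) -> False.
Proof.
  intros Hadm Hexp Hle Hj Hlt.
  pose proof (efficient_welfare_ge x' y' g' Hadm Hexp) as Hwel. unfold welfare in Hwel.
  pose proof (sumR_lt n _ _ j Hle Hj Hlt). lra.
Qed.

(* Otherwise the link could be dropped and its cost spent on [i]'s private good. *)
Lemma link_target_active i j : (i < n)%nat -> (j < n)%nat -> g i j = true -> 0 < x j.
Proof.
  intros Hi Hj Hg. pose proof efficient_admissible as Hadm.
  destruct (Rlt_or_le 0 (x j)) as [|Hx]; [assumption|exfalso].
  assert (Hx0 : x j = 0) by (destruct (Hadm j Hj); lra).
  assert (Hpi := Hp i Hi). assert (Hkp : 0 < k / p i) by (apply Rdiv_lt_0_compat; lra).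
  set (y' := fun u => y u + if Nat.eqb u i then k / p i else 0).
  assert (Hxbar : forall u, (u < n)%nat -> xbar n x (unlink g i j) u = xbar n x g u).
  { intros u Hu. unfold xbar, unlink. f_equal. apply sumR_ext. intros v Hv. case_links. }
  apply (no_pareto_improvement x y' (unlink g i j) i); auto.
  - intros u Hu. destruct (Hadm u Hu) as (Hxu & Hyu & Hgu). unfold y', unlink. case_links.
  - unfold expenditure.
    rewrite (sumR_perturb n (fun u => p u * y u) (fun u => p u * y' u) i k),
      (sumR_perturb n (eta n g) (eta n (unlink g i j)) i (-1)); auto.
    + lra.
    + intros u Hu. unfold eta.
      destruct (Nat.eqb_spec u i) as [->|Hui].
      * rewrite (sumR_perturb n (fun v => if g i v then 1 else 0) _ j (-1)); auto.
        intros v Hv. unfold unlink. case_links.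
      * rewrite Rplus_0_r. apply sumR_ext. intros v Hv. unfold unlink. case_links.
    + intros u Hu. unfold y'. case_links. field. lra.
  - intros u Hu. rewrite Hxbar by auto. apply U_le; auto.
    + split; [apply xbar_nonneg; auto; apply Hadm|lra].
    + destruct (Hadm u Hu) as (_ & Hyu & _). unfold y'. case_links.
  - rewrite Hxbar by auto. apply U_lt; auto.
    + split; [apply xbar_nonneg; auto; apply Hadm|lra].
    + destruct (Hadm i Hi) as (_ & Hyi & _). unfold y'. case_links.
    + right. unfold y'. case_links.
Qed.

Lemma merge_adds_links a b : (a < n)%nat -> (b < n)%nat -> a <> b -> 0 < x a ->
  sumR n (eta n g) < sumR n (eta n (mergeG g a b)) + indicator (g b a).
Proof.
  intros Ha Hb Hab Hxa. apply Rnot_le_lt. intros Hlinks. pose proof efficient_admissible as Hadm.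
  destruct (Hadm a Ha) as (_ & _ & Haa). destruct (Hadm b Hb) as (Hxb & _ & Hbb).
  assert (Hpb := Hp b Hb).
  set (s := k * indicator (g b a)).
  assert (Hs : 0 <= s) by (unfold s, indicator; case_links).
  assert (Hsp : 0 <= s / p b) by (apply Rdiv_le_0_compat; lra).
  set (y' := fun v => y v + if Nat.eqb v b then s / p b else 0).
  assert (Hy' : forall v, (v < n)%nat -> 0 <= y v <= y' v).
  { intros v Hv. destruct (Hadm v Hv) as (_ & Hyv & _). unfold y'. case_links. }
  assert (Hxbar : forall u, (u < n)%nat ->
                    0 <= xbar n x g u <= xbar n (mergeX x a b) (mergeG g a b) u).
  { intros u Hu. split; [apply xbar_nonneg; auto; apply Hadm|].
    apply merge_xbar_ge; auto; lra. }
  apply (no_pareto_improvement (mergeX x a b) y' (mergeG g a b) b); auto.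
  - intros u Hu. destruct (Hadm u Hu) as (Hxu & _ & Hgu). split; [|split].
    + unfold mergeX. case_links.
    + destruct (Hy' u Hu); lra.
    + apply mergeG_loop; auto.
  - unfold expenditure. rewrite mergeX_sum by auto.
    rewrite (sumR_perturb n (fun u => p u * y u) (fun u => p u * y' u) b s); auto.
    + apply Rmult_le_compat_l with (r := k) in Hlinks; [unfold s in *; lra|lra].
    + intros u Hu. unfold y'. case_links. field. lra.
  - intros u Hu. apply U_le; auto.
  - apply U_lt; auto. rewrite merge_xbar_dst by auto.
    unfold y', s, indicator. rewrite Nat.eqb_refl. destruct (g b a).
    + right. assert (0 < k * 1 / p b) by (apply Rdiv_lt_0_compat; lra). lra.
    + left. lra.
Qed.

(* An active linker could merge her provision into the player she links to. *)
Lemma linking_player_inactive i j : (i < n)%nat -> (j < n)%nat -> g i j = true -> x i = 0.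
Proof.
  intros Hi Hj Hg. pose proof efficient_admissible as Hadm.
  destruct (Hadm i Hi) as (Hxi & _ & Hii). destruct (Hadm j Hj) as (_ & _ & Hjj).
  destruct (Rlt_or_le 0 (x i)) as [Hx|]; [exfalso|lra].
  assert (Hij : i <> j) by (intros ->; congruence).
  set (relief := fun u => if Nat.eqb u j then indicator (g j i) else 0).
  assert (Hrelief : sumR n (fun u => eta n g u - relief u) = sumR n (eta n g) - indicator (g j i)).
  { apply (sumR_perturb n (eta n g) _ j); [exact Hj|]. intros v Hv. unfold relief. case_links. }
  assert (sumR n (eta n (mergeG g i j)) <= sumR n (fun u => eta n g u - relief u)).
  { apply sumR_le. intros u Hu. unfold relief, indicator.
    destruct (Nat.eq_dec u i) as [->|Hui]; [rewrite merge_eta_src, Hg by auto; case_links|].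
    destruct (Nat.eq_dec u j) as [->|Huj]; [rewrite merge_eta_dst by auto; case_links|].
    rewrite merge_eta_other by auto. case_links. }
  pose proof (merge_adds_links i j Hi Hj Hij Hx). lra.
Qed.

(* Merging [a] into [b] costs at most [a]'s new link to [b] and saves [l]'s second link. *)
Lemma no_common_linker a b l : (a < n)%nat -> (b < n)%nat -> (l < n)%nat -> a <> b ->
  0 < x a -> g b a = false -> g l a = true -> g l b = true -> False.
Proof.
  intros Ha Hb Hl Hab Hxa Hba Hla Hlb. pose proof efficient_admissible as Hadm.
  destruct (Hadm a Ha) as (_ & _ & Haa). destruct (Hadm b Hb) as (_ & _ & Hbb).
  destruct (Hadm l Hl) as (_ & _ & Hll).
  assert (Hal : l <> a) by (intros ->; congruence).
  assert (Hbl : l <> b) by (intros ->; congruence).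
  set (trade := fun u => (if Nat.eqb u a then 1 else 0) + (if Nat.eqb u l then -1 else 0)).
  assert (Htrade : sumR n (fun u => eta n g u + trade u) = sumR n (eta n g)).
  { rewrite (sumR_perturb2 n (eta n g) _ a l 1 (-1)); auto; [lra|].
    intros v Hv. unfold trade. lra. }
  assert (sumR n (eta n (mergeG g a b)) <= sumR n (fun u => eta n g u + trade u)).
  { apply sumR_le. intros u Hu. unfold trade.
    destruct (Nat.eq_dec u a) as [->|Hua]; [rewrite merge_eta_src by auto; case_links|].
    destruct (Nat.eq_dec u b) as [->|Hub]; [rewrite merge_eta_dst, Hba by auto; case_links|].
    rewrite merge_eta_other by auto.
    destruct (Nat.eq_dec u l) as [->|Hul]; [rewrite Hla, Hlb; case_links|case_links]. }
  pose proof (merge_adds_links a b Ha Hb Hab Hxa) as Hmerge.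
  rewrite Hba in Hmerge. unfold indicator in Hmerge. lra.
Qed.

Lemma shift_first_order t1 t2 : (t1 < n)%nat -> (t2 < n)%nat -> t1 <> t2 ->
  0 < x t2 <= x t1 ->
  sumR n (fun u => shift_dir g t1 t2 u * Derive (fun s => U u s (y u)) (xbar n x g u)) = 0.
Proof.
  intros H1 H2 H12 Hx. pose proof efficient_admissible as Hadm.
  apply (welfare_first_order _ _ _ (x t2)); try tauto.
  - intros u Hu. apply xbar_nonneg; auto. apply Hadm.
  - apply Hadm.
  - intros t Ht.
    rewrite (sumR_ext n _ (fun u => U u (xbar n (shiftX x t1 t2 t) g u) (y u)))
      by (intros u Hu; rewrite shift_xbar; auto).
    apply efficient_welfare_ge.
    + intros u Hu. destruct (Hadm u Hu) as (Hxu & Hyu & Hgu). unfold shiftX. case_links.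
    + unfold expenditure. rewrite shiftX_sum by auto. lra.
Qed.

Lemma redirect_first_order t1 t2 : (t1 < n)%nat -> (t2 < n)%nat -> t1 <> t2 ->
  0 < x t2 <= x t1 -> g t1 t2 = false ->
  (forall u, (u < n)%nat -> g u t1 = true -> g u t2 = false) ->
  sumR n (fun u => redirect_dir g t1 t2 u *
    Derive (fun s => U u s (y u)) (xbar n x g u + redirect_gain x g t1 t2 u)) = 0.
Proof.
  intros H1 H2 H12 Hx Hno12 Hdisj. pose proof efficient_admissible as Hadm.
  assert (Hgain : forall u, 0 <= redirect_gain x g t1 t2 u)
    by (intros u; unfold redirect_gain; case_links).
  assert (Hwel : forall t, -x t2 < t < x t2 ->
     sumR n (fun u => U u (xbar n x g u + redirect_gain x g t1 t2 u + t * redirect_dir g t1 t2 u) (y u))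
     <= welfare n U x y g).
  { intros t Ht.
    rewrite (sumR_ext n _ (fun u => U u (xbar n (shiftX x t1 t2 t) (redirG g t1 t2) u) (y u)))
      by (intros u Hu; rewrite redirect_xbar; auto).
    apply efficient_welfare_ge.
    - intros u Hu. destruct (Hadm u Hu) as (Hxu & Hyu & Hgu). unfold shiftX, redirG. case_links.
    - unfold expenditure. rewrite shiftX_sum by auto.
      assert (Hlinks : sumR n (eta n (redirG g t1 t2)) <= sumR n (eta n g))
        by (apply sumR_le; intros; apply redirect_eta_le; auto).
      apply Rmult_le_compat_l with (r := k) in Hlinks; lra. }
  assert (Hbase : welfare n U x y g
                  <= sumR n (fun u => U u (xbar n x g u + redirect_gain x g t1 t2 u) (y u))).
  { apply sumR_le. intros u Hu. destruct (Hadm u Hu) as (_ & Hyu & _).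
    assert (0 <= xbar n x g u) by (apply xbar_nonneg; auto; apply Hadm).
    specialize (Hgain u). apply U_le; auto; lra. }
  apply (welfare_first_order _ _ _ (x t2)); try tauto.
  - intros u Hu. specialize (Hgain u).
    assert (0 <= xbar n x g u) by (apply xbar_nonneg; auto; apply Hadm). lra.
  - apply Hadm.
  - intros t Ht. specialize (Hwel t Ht). lra.
Qed.

(* Subtracting the first-order conditions for shifting provision from [t2] to
   [t1], before and after redirecting [t2]'s linkers to [t1], leaves a sum of
   marginal utilities of [t2]'s linkers, which is positive. *)
Lemma distinct_targets_absurd t1 t2 m : (t1 < n)%nat -> (t2 < n)%nat -> (m < n)%nat ->
  t1 <> t2 -> g m t2 = true -> 0 < x t2 <= x t1 ->
  (forall v, (v < n)%nat -> g t1 v = false) -> (forall v, (v < n)%nat -> g t2 v = false) ->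
  (forall u, (u < n)%nat -> g u t1 = true -> g u t2 = false) -> False.
Proof.
  intros H1 H2 Hm H12 Hmt2 Hx Hout1 Hout2 Hdisj. pose proof efficient_admissible as Hadm.
  set (D := fun u a => Derive (fun s => U u s (y u)) a).
  set (A := fun u => xbar n x g u + redirect_gain x g t1 t2 u).
  set (gap := fun u => redirect_dir g t1 t2 u * D u (A u) - shift_dir g t1 t2 u * D u (xbar n x g u)).
  assert (Hgap : forall u, (u < n)%nat -> if g u t2 then 0 < gap u else gap u = 0).
  { intros u Hu. destruct (Hadm u Hu) as (_ & Hyu & _).
    assert (HxA : 0 <= xbar n x g u <= A u).
    { assert (0 <= xbar n x g u) by (apply xbar_nonneg; auto; apply Hadm).
      unfold A, redirect_gain. case_links. }
    assert (HD : 0 < D u (xbar n x g u)) by (apply HUmarg; auto; lra).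
    assert (HDA : 0 < D u (A u)) by (apply HUmarg; auto; lra).
    unfold gap, A, redirect_dir, shift_dir, redirect_gain, indicator in *.
    destruct (Nat.eqb_spec u t1) as [->|Hu1]; [rewrite (Hout1 t1), (Hout1 t2) in * by auto|].
    2: destruct (Nat.eqb_spec u t2) as [->|Hu2]; [rewrite (Hout2 t1), (Hout2 t2) in * by auto|].
    3: destruct (g u t1) eqn:Hut1; [rewrite (Hdisj u Hu Hut1) in *|].
    all: case_links; rewrite ?Rplus_0_r; lra. }
  assert (Hpos : sumR n (fun _ => 0) < sumR n gap).
  { apply (sumR_lt n _ _ m); auto.
    - intros u Hu. specialize (Hgap u Hu). destruct (g u t2); lra.
    - specialize (Hgap m Hm). rewrite Hmt2 in Hgap. exact Hgap. }
  unfold gap, D, A in Hpos. rewrite sumR_minus in Hpos.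
  rewrite (shift_first_order t1 t2), (redirect_first_order t1 t2) in Hpos; auto.
  rewrite (sumR_ext n _ (fun _ => 0 * 0)) in Hpos by (intros; ring).
  rewrite sumR_scal in Hpos. lra.
Qed.

Lemma link_targets_eq i j i' j' : (i < n)%nat -> (j < n)%nat -> (i' < n)%nat -> (j' < n)%nat ->
  g i j = true -> g i' j' = true -> j = j'.
Proof.
  intros Hi Hj Hi' Hj' Hg Hg'.
  destruct (Nat.eq_dec j j') as [|Hne]; [assumption|exfalso].
  assert (Hxj : 0 < x j) by (apply (link_target_active i j); auto).
  assert (Hxj' : 0 < x j') by (apply (link_target_active i' j'); auto).
  assert (Hout : forall t v, (t < n)%nat -> (v < n)%nat -> 0 < x t -> g t v = false).
  { intros t v Ht Hv Hxt. destruct (g t v) eqn:Htv; [|reflexivity].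
    pose proof (linking_player_inactive t v Ht Hv Htv). lra. }
  assert (Hdisj : forall a b u, (a < n)%nat -> (b < n)%nat -> (u < n)%nat -> a <> b ->
                    0 < x a -> 0 < x b -> g u a = true -> g u b = false).
  { intros a b u Ha Hb Hu Hab Hxa Hxb Hua. destruct (g u b) eqn:Hub; [|reflexivity].
    exfalso. apply (no_common_linker a b u); auto. }
  destruct (Rle_or_lt (x j') (x j)) as [Hle|Hlt].
  - apply (distinct_targets_absurd j j' i' Hj Hj' Hi' Hne Hg' (conj Hxj' Hle)); intros;
      [apply Hout|apply Hout|apply (Hdisj j j')]; auto.
  - apply (distinct_targets_absurd j' j i Hj' Hj Hi (not_eq_sym Hne) Hg (conj Hxj (Rlt_le _ _ Hlt)));
      intros; [apply Hout|apply Hout|apply (Hdisj j' j)]; auto.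
Qed.

End EfficientAllocation.

Lemma C2_quadrant_ex_derive (u : R -> R -> R) a b : C2_quadrant u -> 0 <= a -> 0 <= b ->
  ex_derive (fun s => u s b) a.
Proof.
  intros [eps [Heps HC2]] Ha Hb. destruct (HC2 a b ltac:(lra) ltac:(lra)) as [[Hex _] _].
  exact Hex.
Qed.

Lemma concave_increasing_Derive_gt_0 (u : R -> R -> R) a b :
  strictly_concave_quadrant u -> increasing_quadrant u -> ex_derive (fun s => u s b) a ->
  0 <= a -> 0 <= b -> 0 < Derive (fun s => u s b) a.
Proof.
  intros Hconc [Hinc _] Hex Ha Hb.
  apply Derive_gt_0_of_concave; [exact Hex|apply Hinc; lra|].
  intros t Ht.
  assert (Hne : (a + 1, b) <> (a, b)) by (intros E; injection E; lra).
  pose proof (Hconc (a + 1) b a b t ltac:(lra) Hb Ha Hb Hne Ht) as Hchord.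
  replace (t * (a + 1) + (1 - t) * a) with (a + t) in Hchord by ring.
  replace (t * b + (1 - t) * b) with b in Hchord by ring.
  lra.
Qed.

Lemma star_only_hub_active_intro n (g : network) (x : nat -> R) h i0 :
  (h < n)%nat -> (i0 < n)%nat -> g i0 h = true -> g h h = false ->
  (forall i j, (i < n)%nat -> (j < n)%nat -> g i j = true -> j = h) ->
  0 < x h -> (forall i, (i < n)%nat -> g i h = true -> x i = 0) ->
  star_only_hub_active n g x.
Proof.
  intros Hh Hi0 Hi0h Hhh Hhub Hxh Hspokes.
  exists h, (fun i => Nat.eqb i h || g i h).
  assert (Hspoke_ne : forall i, g i h = true -> i <> h) by (intros i Hih ->; congruence).
  split; [exact Hh|]. split; [now rewrite Nat.eqb_refl|].
  split; [exists i0; rewrite Hi0h, orb_true_r; auto|].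
  split; [|split; [exact Hxh|]].
  - intros i j Hi Hj. split.
    + intros Hij. assert (j = h) as -> by (apply (Hhub i j); auto).
      rewrite Hij, orb_true_r. auto.
    + intros (Hmem & Hih & ->). destruct (Nat.eqb_spec i h); [contradiction|exact Hmem].
  - intros i Hi Hmem Hih. destruct (Nat.eqb_spec i h); [contradiction|]. auto.
Qed.

Theorem proposition6
  (n : nat) (U : nat -> R -> R -> R) (w p : nat -> R) (k : R)
  (gam : nat -> R -> R)
  (Hk : 0 < k)
  (Hw : forall i, (i < n)%nat -> 0 < w i)
  (Hp : forall i, (i < n)%nat -> 0 < p i)
  (HUC2 : forall i, (i < n)%nat -> C2_quadrant (U i))
  (HUconc : forall i, (i < n)%nat -> strictly_concave_quadrant (U i))
  (HUinc : forall i, (i < n)%nat -> increasing_quadrant (U i))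
  (Hgam : forall i, (i < n)%nat -> engel_curve (U i) (p i) (gam i))
  (HA1 : forall i, (i < n)%nat -> assumption1_curve (gam i))
  (x y : nat -> R) (g : network)
  (Heff : efficient n U w p k x y g) :
  empty_network n g \/ star_only_hub_active n g x.
Proof.
  assert (HUder : forall i a b, (i < n)%nat -> 0 <= a -> 0 <= b ->
                    ex_derive (fun s => U i s b) a)
    by (intros; apply C2_quadrant_ex_derive; auto).
  assert (HUmarg : forall i a b, (i < n)%nat -> 0 <= a -> 0 <= b ->
                     0 < Derive (fun s => U i s b) a)
    by (intros; apply concave_increasing_Derive_gt_0; auto).
  pose proof (efficient_admissible n U w p k x y g Heff) as Hadm.
  destruct (classic (exists i j, (i < n)%nat /\ (j < n)%nat /\ g i j = true))
    as [[i0 [h (Hi0 & Hh & Hi0h)]]|Hnone].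
  - right. apply (star_only_hub_active_intro n g x h i0); auto.
    + apply Hadm, Hh.
    + intros i j Hi Hj Hij.
      exact (link_targets_eq n U w p k Hk Hp HUinc HUder HUmarg x y g Heff i j i0 h
               Hi Hj Hi0 Hh Hij Hi0h).
    + exact (link_target_active n U w p k Hk Hp HUinc x y g Heff i0 h Hi0 Hh Hi0h).
    + intros i Hi Hih. exact (linking_player_inactive n U w p k Hk Hp HUinc x y g Heff i h Hi Hh Hih).
  - left. intros i j Hi Hj. destruct (g i j) eqn:Hij; [|reflexivity].
    exfalso. apply Hnone. eauto.
Qed.
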